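(* Let $G$ be a finite group and let $g,h\in G$ with $\langle g\rangle=\langle h\rangle$. Suppose there is a normal subgroup $N\trianglelefteq G$ such that $G/N$ is semi-rational, $gN\subseteq O(g)$ and $hN\subseteq O(h)$. Then $N_{w,G}(g)=N_{w,G}(h)$ for every $r\in\mathbb{N}$ and every word $w\in F_r$.
   Context: For $r\in\mathbb{N}$ and a word $w\in F_r$ (free group on $x_1,\dots,x_r$), the word map $w:G^r\to G$ substitutes $g_i$ for $x_i$, and $N_{w,G}(g)=|\{(g_1,\dots,g_r)\in G^r: w(g_1,\dots,g_r)=g\}|$. A finite group $H$ is semi-rational if for every $r$ and every $w\in F_r$, $N_{w,H}$ is a generalized character, i.e. $\langle N_{w,H},\chi\rangle\in\mathbb{Z}$ for every irreducible character $\chi$ of $H$. For $g\in G$, $O(g)=\{\alpha(g):\alpha\in\mathrm{Aut}(G)\}$ denotes the orbit of $g$ under the automorphism group. *)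

From HB Require Import structures.
From mathcomp Require Import all_boot all_order all_algebra all_fingroup all_solvable all_field all_character.
Set Implicit Arguments. Unset Strict Implicit. Unset Printing Implicit Defensive.
Import GRing.Theory Num.Theory.

(* A word of the free group F_r on x_1..x_r (x_i indexed by 'I_r), given as a
   (not necessarily reduced) sequence of letters (i, inv): the letter is x_i
   if inv = false and x_i^-1 if inv = true.  Every element of F_r is
   represented by such a sequence, and the word map only depends on the
   element of F_r represented. *)
Definition word (r : nat) := seq ('I_r * bool).

Definition letter_eval (gT : finGroupType) (r : nat) (t : {ffun 'I_r -> gT})
  (l : 'I_r * bool) : gT :=
  if l.2 then ((t l.1)^-1)%g else t l.1.

Definition word_eval (gT : finGroupType) (r : nat) (w : word r)
  (t : {ffun 'I_r -> gT}) : gT :=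
  (\prod_(l <- w) letter_eval t l)%g.

Definition Nw (gT : finGroupType) (H : {set gT}) (r : nat) (w : word r)
  (x : gT) : nat :=
  #|[set t : {ffun 'I_r -> gT} | [forall i, t i \in H] && (word_eval w t == x)]|.

Definition Nw_dot (gT : finGroupType) (H : {group gT}) (r : nat) (w : word r)
  (i : Iirr H) : algC :=
  ((#|H|%:R)^-1 * \sum_(x in H) (Nw H w x)%:R * (('chi[H]_i x)^*)%C)%R.

(* H is semi-rational: for every r and every w in F_r, N_{w,H} is a
   generalized character, i.e. <N_{w,H}, chi> is an integer for every
   irreducible character chi of H. *)
Definition semi_rational (gT : finGroupType) (H : {group gT}) : Prop :=
  forall (r : nat) (w : word r) (i : Iirr H), Nw_dot w i \in Num.int.

Definition aut_orbit (gT : finGroupType) (G : {set gT}) (g : gT) : {set gT} :=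
  [set (a : {perm gT}) g | a in Aut G].

(* Both N_{w,G}(g) and N_{w,G}(h) can be read off the number of r-tuples of G
   whose word value lies in the coset gN (resp. hN).  Since gN lies in the
   automorphism orbit of g, and N_{w,G} is constant on automorphism orbits,
   that number is |N| N_{w,G}(g).  Counting the same tuples through G/N gives
   |N|^r N_{w,G/N}(gN).  Finally h = g^k with k prime to the order of g, and
   a semi-rational group has N_{w,G/N} constant on such Galois conjugates: it
   is an integral combination of irreducible characters, and the Galois
   automorphism z |-> z^k of Q(zeta_n) sends chi(x) to chi(x^k). *)
From mathcomp Require Import all_boot all_order all_algebra all_fingroup all_solvable all_field all_character.
Set Implicit Arguments. Unset Strict Implicit. Unset Printing Implicit Defensive.
Import GRing.Theory Num.Theory.
Local Open Scope group_scope.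

Definition Nw_in (gT : finGroupType) (G : {set gT}) (r : nat) (w : word r)
  (A : {set gT}) : nat :=
  #|[set t : {ffun 'I_r -> gT} | [forall i, t i \in G] && (word_eval w t \in A)]|.

Section WordMaps.

Variables (gT : finGroupType) (r : nat).

Lemma mem_word_eval (w : word r) (D : {group gT}) (t : {ffun 'I_r -> gT}) :
  (forall i, t i \in D) -> word_eval w t \in D.
Proof.
move=> tD; rewrite /word_eval; elim: w => [|l w IH]; first by rewrite big_nil group1.
by rewrite big_cons groupM // /letter_eval; case: l.2; rewrite ?groupV.
Qed.

Lemma morph_word_eval (w : word r) (rT : finGroupType) (D : {group gT})
    (f : {morphism D >-> rT}) (t : {ffun 'I_r -> gT}) :
  (forall i, t i \in D) -> f (word_eval w t) = word_eval w [ffun i => f (t i)].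
Proof.
move=> tD; rewrite /word_eval; elim: w => [|l w IH]; first by rewrite !big_nil morph1.
have lD : letter_eval t l \in D by rewrite /letter_eval; case: l.2; rewrite ?groupV.
rewrite !big_cons morphM ?(mem_word_eval w tD) // IH /letter_eval ffunE.
by case: l.2; rewrite ?morphV.
Qed.

Lemma Nw_aut_leq (w : word r) (H : {group gT}) (a : {perm gT}) y :
  a \in Aut H -> (Nw H w y <= Nw H w (a y))%N.
Proof.
move=> Aa; pose at_ (t : {ffun 'I_r -> gT}) := [ffun i => a (t i)].
have at_inj : injective at_.
  by move=> t1 t2 /ffunP E; apply/ffunP => i; move: (E i); rewrite !ffunE => /perm_inj.
rewrite /Nw -(card_imset _ at_inj); apply/subset_leq_card/subsetP => _ /imsetP[t + ->].
rewrite !inE => /andP[/forallP tH /eqP <-]; apply/andP; split.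
  by apply/forallP => i; rewrite ffunE Aut_closed.
rewrite -(autmE Aa) (morph_word_eval w (autm Aa) tH).
by apply/eqP; congr word_eval; apply/ffunP => i; rewrite !ffunE autmE.
Qed.

Lemma Nw_aut (w : word r) (H : {group gT}) (a : {perm gT}) y :
  a \in Aut H -> Nw H w (a y) = Nw H w y.
Proof.
move=> Aa; apply/eqP; rewrite eqn_leq Nw_aut_leq // andbT.
by have := Nw_aut_leq w (a y) (groupVr Aa); rewrite permK.
Qed.

Lemma Nw_conjg (w : word r) (H : {group gT}) x z :
  x \in H -> z \in H -> Nw H w (x ^ z) = Nw H w x.
Proof.
move=> Hx Hz; have nHz := subsetP (normG H) z Hz.
have Az : conj_aut H z \in Aut H by rewrite (subsetP (Aut_conj_aut H H)) ?mem_morphim.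
by rewrite -(norm_conj_autE nHz Hx) Nw_aut.
Qed.

Lemma Nw_in_aut_orbit (w : word r) (G : {group gT}) (A : {set gT}) g :
  A \subset aut_orbit G g -> Nw_in G w A = (#|A| * Nw G w g)%N.
Proof.
move=> sAO; rewrite /Nw_in -sum1dep_card.
rewrite (partition_big (word_eval w) [in A]) /=; last by move=> t /andP[].
rewrite -sum_nat_const; apply: eq_bigr => x Ax; rewrite sum1dep_card.
have /imsetP[a Aa xE] := subsetP sAO x Ax.
rewrite -(Nw_aut w g Aa) -xE /Nw; apply: eq_card => t; rewrite !inE.
by case: (word_eval w t =P x) => [-> | _]; rewrite ?Ax ?andbF ?andbT.
Qed.

End WordMaps.

Section GaloisConjugation.

Local Open Scope ring_scope.

Variables (gT : finGroupType) (H : {group gT}).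

Lemma char_expg_rmorph (chi : 'CF(H)) y k (u : {rmorphism algC -> algC}) :
    chi \is a character -> y \in H ->
    (forall z, z ^+ #[y]%g = 1 -> u z = z ^+ k) ->
  chi (y ^+ k)%g = u (chi y).
Proof.
move=> Nchi Hy uX; have sYH : <[y]> \subset H by rewrite cycle_subG.
have Yy : y \in <[y]> := cycle_id y.
have Yyk : (y ^+ k)%g \in <[y]> by rewrite mem_cycle.
rewrite -(cfResE chi sYH Yy) -(cfResE chi sYH Yyk).
have [m ->] := char_sum_irr (cfRes_char <[y]> Nchi).
rewrite !sum_cfunE rmorph_sum; apply: eq_bigr => i _.
have lin : 'chi[<[y]>]_i \is a linear_char by rewrite irr_cyclic_lin ?cycle_cyclic.
by rewrite lin_charX // uX // -lin_charX // expg_order lin_char1.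
Qed.

Lemma cfun_int_expg_rmorph (phi : 'CF(H)) y k (u : {rmorphism algC -> algC}) :
    (forall i, '[phi, 'chi_i] \in Num.int) -> y \in H ->
    (forall z, z ^+ #[y]%g = 1 -> u z = z ^+ k) ->
  phi (y ^+ k)%g = u (phi y).
Proof.
move=> Zphi Hy uX; rewrite [phi]cfun_sum_cfdot !sum_cfunE rmorph_sum.
apply: eq_bigr => i _; rewrite !cfunE rmorphM /= (char_expg_rmorph _ _ uX) ?irr_char //.
by rewrite (aut_intr u (Zphi i)).
Qed.

End GaloisConjugation.

Section WordClassFunction.

Local Open Scope ring_scope.

Variables (gT : finGroupType) (H : {group gT}) (r : nat) (w : word r).

Lemma Nw_class_fun :
  is_class_fun <<H>> [ffun x => if x \in H then (Nw H w x)%:R else 0 : algC].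
Proof.
rewrite genGid; apply: intro_class_fun => [x z Hx Hz | x /negPf->] //.
by rewrite groupJ // Hx Nw_conjg.
Qed.

Definition cfNw : 'CF(H) := Cfun 0 Nw_class_fun.

Lemma cfNwE x : x \in H -> cfNw x = (Nw H w x)%:R.
Proof. by move=> Hx; rewrite cfunE Hx. Qed.

Lemma cfdot_cfNw_irr i : '[cfNw, 'chi_i] = Nw_dot w i.
Proof. by rewrite cfdotE /Nw_dot; congr (_ * _); apply: eq_bigr => x /cfNwE->. Qed.

Lemma Nw_expg_coprime y k :
  semi_rational H -> y \in H -> coprime k #[y]%g -> Nw H w (y ^+ k)%g = Nw H w y.
Proof.
move=> srH Hy co_k_y; have [u uX] := Qn_aut_exists co_k_y.
have Zdot i : '[cfNw, 'chi_i] \in Num.int by rewrite cfdot_cfNw_irr.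
apply/eqP; rewrite -(eqr_nat algC) -!cfNwE ?groupX //.
by rewrite (cfun_int_expg_rmorph Zdot Hy uX) cfNwE // rmorph_nat.
Qed.

End WordClassFunction.

Section QuotientCount.

Variables (gT : finGroupType) (G N : {group gT}) (r : nat) (w : word r).
Hypothesis nsNG : N <| G.

Let nNG : G \subset 'N(N) := normal_norm nsNG.

Lemma mem_lcoset_coset g x :
  g \in G -> x \in G -> (x \in g *: N) = (coset N x == coset N g).
Proof.
move=> Gg Gx; have nNg := subsetP nNG g Gg; have nNx := subsetP nNG x Gx.
by rewrite -norm_rlcoset //; apply/idP/eqP => /(rcoset_kercosetP nNx nNg).
Qed.

Lemma word_eval_coset (t : {ffun 'I_r -> gT}) :
  (forall i, t i \in G) ->
  word_eval w [ffun i => coset N (t i)] = coset N (word_eval w t).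
Proof.
move=> tG; rewrite (morph_word_eval w (coset_morphism N)) => [|i].
  by congr word_eval; apply/ffunP => i; rewrite !ffunE.
exact: subsetP nNG _ (tG i).
Qed.

Lemma card_coset_tuples (s : {ffun 'I_r -> coset_of N}) :
  #|setXn (fun i => s i : {set gT})| = (#|N| ^ r)%N.
Proof.
rewrite cardsXn (eq_bigr (fun _ => #|N|)) ?prod_nat_const ?card_ord // => i _.
by have [x nNx ->] := cosetP (s i); rewrite val_coset ?card_rcoset.
Qed.

Lemma Nw_in_quotient g :
  g \in G -> Nw_in G w (g *: N) = (#|N| ^ r * Nw (G / N) w (coset N g))%N.
Proof.
move=> Gg; pose pi (t : {ffun 'I_r -> gT}) := [ffun i => coset N (t i)].
rewrite /Nw_in -sum1dep_card.
rewrite (partition_big pi (fun s : {ffun 'I_r -> coset_of N} =>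
  [forall i, s i \in G / N] && (word_eval w s == coset N g))) /=; last first.
  move=> t /andP[/forallP tG wtN]; apply/andP; split.
    by apply/forallP => i; rewrite ffunE mem_quotient.
  by rewrite word_eval_coset // -(mem_lcoset_coset Gg) // mem_word_eval.
rewrite /Nw -sum1dep_card big_distrr /=; apply: eq_bigr => s /andP[/forallP sGN /eqP ws].
rewrite muln1 sum1dep_card -(card_coset_tuples s); apply: eq_card => t.
rewrite in_setXn !inE; apply/idP/forallP => [|ts].
  case/andP=> [/andP[/forallP tG _] /eqP <-] i.
  by rewrite ffunE val_coset ?rcoset_refl // (subsetP nNG _ (tG i)).
have tG i : t i \in G.
  have /morphimP[x nNx Gx sE] := sGN i; move: (ts i); rewrite sE val_coset //.
  by case/rcosetP=> n Nn ->; rewrite groupM // (subsetP (normal_sub nsNG)).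
have pi_t : pi t = s by apply/ffunP => i; rewrite ffunE; apply: coset_mem.
rewrite pi_t eqxx andbT (mem_lcoset_coset Gg) ?mem_word_eval //.
by rewrite -word_eval_coset // -/(pi t) pi_t ws eqxx andbT; apply/forallP.
Qed.

End QuotientCount.

Lemma cycle_eq_expg_coprime (gT : finGroupType) (g h : gT) :
  <[g]> = <[h]> -> exists2 k, coprime #[g] k & h = g ^+ k.
Proof.
move=> eq_gh; have /cycleP[k hk] : h \in <[g]> by rewrite eq_gh cycle_id.
by exists k => //; rewrite -generator_coprime -hk /generator eq_gh.
Qed.

Theorem proposition2p3 (gT : finGroupType) (G N : {group gT}) (g h : gT) :
  (g \in G) -> (h \in G) -> <[g]>%g = <[h]>%g ->
  (N <| G)%g ->
  semi_rational (G / N)%G ->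
  (g *: N \subset aut_orbit G g)%g ->
  (h *: N \subset aut_orbit G h)%g ->
  forall (r : nat) (w : word r), Nw G w g = Nw G w h.
Proof.
move=> Gg Gh eq_gh nsNG srGN gN_orbit hN_orbit r w.
have [k co_g_k hk] := cycle_eq_expg_coprime eq_gh.
have nNg : g \in 'N(N) := subsetP (normal_norm nsNG) g Gg.
have co_k_gN : coprime k #[coset N g].
  by rewrite coprime_sym (coprime_dvdl _ co_g_k) // morph_order.
have NwGN_gh : Nw (G / N) w (coset N h) = Nw (G / N) w (coset N g).
  by rewrite hk morphX // Nw_expg_coprime // mem_quotient.
apply/eqP; rewrite -(eqn_pmul2l (cardG_gt0 N)) -{1}(card_lcoset N g) -(card_lcoset N h).
rewrite -(Nw_in_aut_orbit w gN_orbit) -(Nw_in_aut_orbit w hN_orbit).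
by rewrite !Nw_in_quotient // NwGN_gh.
Qed.
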